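(* Let $P$ be a reversible ergodic Markov chain on a finite set $X$ with stationary distribution $\pi$, let $S,M\subseteq X$ be disjoint and nonempty, $\sigma=\pi|_S$, and $q=(q_S,q_M)\in[0,1)^2$. Let $(Y_i(q))_{i\ge0}$ be the Markov chain with transition matrix $P(q)$ and $Y_0(q)\sim\sigma$, and let $D(q)$ be the discriminant matrix of $P(q)$. Then for all $t,t'\in\mathbb N$ with $t'>t$, \[ \big\|\Pi_M D(q)^t|\sqrt\sigma\rangle\big\|\ \ge\ \Pr\big(Y_t(q)\in M,\ Y_{t'}(q)\in S\big). \]
   Context: $(\pi|_S)_u=\pi_u/\pi(S)$ for $u\in S$ and $0$ otherwise; $|\sqrt\sigma\rangle=\sum_u\sqrt{\sigma_u}|u\rangle$. The interpolated chain is $P(q)_{u,v}=(1-q_S)P_{u,v}+q_S\delta_{uv}$ if $u\in S$, $(1-q_M)P_{u,v}+q_M\delta_{uv}$ if $u\in M$, and $P_{u,v}$ otherwise. The discriminant matrix of a reversible chain $Q$ is $D(Q)=\sqrt{Q\circ Q^T}$ (entrywise). $\Pi_M=\sum_{u\in M}|u\rangle\langle u|$. *)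

From HB Require Import structures.
From mathcomp Require Import all_boot all_order all_algebra.
Set Implicit Arguments. Unset Strict Implicit. Unset Printing Implicit Defensive.
Import Order.TTheory GRing.Theory Num.Theory.
Local Open Scope ring_scope.

Section Defs.
Variable R : rcfType.
Variable n : nat.

(* t-th matrix power (works for any size n, including 0) *)
Definition mxpow (A : 'M[R]_n) (t : nat) : 'M[R]_n := iter t (mulmx A) 1%:M.

Definition stochastic (P : 'M[R]_n) : Prop :=
  (forall u v, 0 <= P u v) /\ (forall u, \sum_v P u v = 1).

Definition irreducible (P : 'M[R]_n) : Prop :=
  forall u v, exists t, 0 < mxpow P t u v.

(* gcd {t : (P^t)_{uu} > 0} = 1 for every state u *)
Definition aperiodic (P : 'M[R]_n) : Prop :=
  forall u (d : nat), (forall t, 0 < mxpow P t u u -> (d %| t)%N) -> d = 1%N.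

Definition ergodic (P : 'M[R]_n) : Prop := irreducible P /\ aperiodic P.

Definition stationary_dist (P : 'M[R]_n) (pi : 'rV[R]_n) : Prop :=
  (forall u, 0 <= pi 0 u) /\ \sum_u pi 0 u = 1 /\ pi *m P = pi.

Definition reversible (P : 'M[R]_n) (pi : 'rV[R]_n) : Prop :=
  forall u v, pi 0 u * P u v = pi 0 v * P v u.

Definition restr_dist (pi : 'rV[R]_n) (S : {set 'I_n}) : 'rV[R]_n :=
  \row_u (if u \in S then pi 0 u / (\sum_(w in S) pi 0 w) else 0).

Definition interp (P : 'M[R]_n) (S M : {set 'I_n}) (qS qM : R) : 'M[R]_n :=
  \matrix_(u, v)
    (if u \in S then (1 - qS) * P u v + qS * (u == v)%:R
     else if u \in M then (1 - qM) * P u v + qM * (u == v)%:R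
     else P u v).

Definition discriminant (Q : 'M[R]_n) : 'M[R]_n :=
  \matrix_(u, v) Num.sqrt (Q u v * Q v u).

Definition sqrt_vec (sigma : 'rV[R]_n) : 'cV[R]_n :=
  \col_u Num.sqrt (sigma 0 u).

Definition projnorm (M : {set 'I_n}) (x : 'cV[R]_n) : R :=
  Num.sqrt (\sum_(u in M) x u 0 ^+ 2).

(* Pr(Y_t in M, Y_t' in S) for the chain with kernel Q and Y_0 ~ sigma, t <= t' *)
Definition prob_two_times (Q : 'M[R]_n) (sigma : 'rV[R]_n)
    (M S : {set 'I_n}) (t t' : nat) : R :=
  \sum_(u in M) \sum_(v in S)
     (sigma *m mxpow Q t) 0 u * mxpow Q (t' - t) u v.
End Defs.

(* The lazy chain Q = P(q) is reversible with respect to the positive weights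
   w u = pi u / (1 - q u), and sigma = pi|_S equals c w on S for a constant c.
   Hence D(Q) = diag(sqrt w) Q diag(sqrt w)^-1, and with a_r u := Pr_u(Y_r in S)
     (D^t |sqrt sigma>)_u = sqrt (c w u) a_t u,   Pr(Y_t = u) = c w u a_t u.
   The claim becomes  sum_M c w a_t a_(t'-t) <= sqrt (sum_M c w a_t^2),  which
   is a Cauchy-Schwarz inequality: the weights c w u a_(t'-t) u form a
   probability distribution and a_(t'-t) <= 1. *)
From HB Require Import structures.
From mathcomp Require Import all_boot all_order all_algebra.
From mathcomp Require Import ring lra.
Import Order.TTheory GRing.Theory Num.Theory.
Local Open Scope ring_scope.
Set Implicit Arguments. Unset Strict Implicit. Unset Printing Implicit Defensive.

Lemma weighted_sum_le_sqrt (R : rcfType) (I : finType) (A : {pred I})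
    (al a b : I -> R) :
  (forall u, 0 <= al u) -> (forall u, 0 <= a u) -> (forall u, 0 <= b u <= 1) ->
  \sum_u al u * b u = 1 ->
  \sum_(u in A) al u * a u * b u <= Num.sqrt (\sum_(u in A) al u * a u ^+ 2).
Proof.
move=> al0 a0 b01 alb1.
set X := \sum_(u in A) al u * a u * b u.
set Y := \sum_(u in A) al u * a u ^+ 2.
set B := \sum_(u in A) al u * b u ^+ 2.
have X0 : 0 <= X.
  apply: sumr_ge0 => u _; have /andP[b0 _] := b01 u.
  exact: mulr_ge0 (mulr_ge0 _ _) b0.
have B1 : B <= 1.
  rewrite -alb1 [leLHS]big_mkcond /=; apply: ler_sum => u _.
  have /andP[b0 b1] := b01 u.
  by case: (u \in A); rewrite ?mulr_ge0 // ler_wpM2l // expr2 ler_piMr.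
(* Test the quadratic form at the coefficient X itself; B <= 1 then suffices. *)
have expand :
    \sum_(u in A) al u * (a u - X * b u) ^+ 2 = Y - 2 * X * X + X ^+ 2 * B.
  rewrite [2 * X * X]mulr_sumr /B mulr_sumr -sumrB -big_split /=.
  by apply: eq_bigr => u _; ring.
have sq0 : 0 <= \sum_(u in A) al u * (a u - X * b u) ^+ 2.
  by apply: sumr_ge0 => u _; rewrite mulr_ge0 // sqr_ge0.
have XB : X ^+ 2 * B <= X ^+ 2 by rewrite ler_piMr ?sqr_ge0.
have XY : X ^+ 2 <= Y by move: sq0; rewrite expand; nra.
by rewrite -(ger0_norm X0) -sqrtr_sqr ler_wsqrtr.
Qed.

Section ReversibleChains.
Variables (R : rcfType) (n : nat).
Implicit Types (A B P Q : 'M[R]_n) (pi x w : 'rV[R]_n) (S M : {set 'I_n}).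

Lemma mxpowE A t : mxpow A t = A ^+ t.
Proof. by elim: t => [|t IH] //=; rewrite exprS IH mulmxE. Qed.

Lemma mxpowSr A t : mxpow A t.+1 = mxpow A t *m A.
Proof. by rewrite !mxpowE exprSr mulmxE. Qed.

Lemma stochastic_mxpow Q t : stochastic Q -> stochastic (mxpow Q t).
Proof.
move=> [Q0 Q1]; elim: t => [|t [IH0 IH1]] /=.
  split=> [u v|u]; first by rewrite mxE ler0n.
  rewrite (bigD1 u) //= big1 ?mxE ?eqxx ?addr0 // => v.
  by rewrite mxE eq_sym => /negbTE->.
split=> [u v|u]; first by rewrite mxE sumr_ge0 // => k _; rewrite mulr_ge0.
under eq_bigr do rewrite mxE.
rewrite exchange_big /=.
by under eq_bigr do rewrite -mulr_sumr IH1 mulr1.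
Qed.

Lemma reversible_mxpow Q w t : reversible Q w -> reversible (mxpow Q t) w.
Proof.
move=> rev; elim: t => [|t IH] u v.
  by rewrite !mxE; case: (eqVneq u v) => [->|]; rewrite ?mulr0.
rewrite [in RHS]mxpowSr !mxE !mulr_sumr; apply: eq_bigr => k _.
by rewrite mulrA rev mulrAC IH -mulrA.
Qed.

Lemma stationary_mxpow P pi t : stationary_dist P pi -> pi *m mxpow P t = pi.
Proof.
move=> [_ [_ piP]]; elim: t => [|t IH]; first by rewrite mulmx1.
by rewrite mxpowSr mulmxA IH piP.
Qed.

Lemma irreducible_stationary_gt0 P pi :
  stochastic P -> irreducible P -> stationary_dist P pi -> forall v, 0 < pi 0 v.
Proof.
move=> stochP irrP statP v; have [pi0 [pi1 _]] := statP.
have [u piu] : exists u, 0 < pi 0 u.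
  apply/existsP; apply: contraT; rewrite negb_exists => /forallP pi_le0.
  move: pi1; rewrite big1 => [/eqP|u _]; first by rewrite eq_sym oner_eq0.
  by apply/eqP; rewrite eq_le pi0 andbT leNgt pi_le0.
have [t Put] := irrP u v.
have [P0 _] := stochastic_mxpow t stochP.
rewrite -(stationary_mxpow t statP) mxE (bigD1 u) //=.
by rewrite ltr_pwDl ?mulr_gt0 // sumr_ge0 // => k _; rewrite mulr_ge0.
Qed.

Lemma mxpow_diag_conj A B (s : 'I_n -> R) :
  (forall u, s u != 0) -> (forall u v, A u v = s u / s v * B u v) ->
  forall t u v, mxpow A t u v = s u / s v * mxpow B t u v.
Proof.
move=> s_neq0 AB t; elim: t => [|t IH] u v /=.
  rewrite !mxE; case: (eqVneq u v) => [->|]; last by rewrite mulr0.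
  by rewrite divff ?mul1r ?s_neq0.
rewrite !mxE mulr_sumr; apply: eq_bigr => k _.
by rewrite AB IH; field; rewrite ?s_neq0.
Qed.

Lemma discriminant_reversible Q w :
  (forall u v, 0 <= Q u v) -> (forall u, 0 < w 0 u) -> reversible Q w ->
  forall u v, discriminant Q u v = Num.sqrt (w 0 u) / Num.sqrt (w 0 v) * Q u v.
Proof.
move=> Q0 w_gt0 rev u v; rewrite mxE.
have wv_neq0 : w 0 v != 0 by rewrite gt_eqF.
have -> : Q v u = w 0 u * Q u v / w 0 v by rewrite rev [w 0 v * _]mulrC mulfK.
have rhs0 : 0 <= Num.sqrt (w 0 u) / Num.sqrt (w 0 v) * Q u v.
  by rewrite mulr_ge0 ?divr_ge0 ?sqrtr_ge0.
rewrite -[RHS]ger0_norm // -sqrtr_sqr.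
by congr Num.sqrt; rewrite !exprMn exprVn !sqr_sqrtr ?ltW //; field.
Qed.

Lemma sum_row_mul_stochastic Q x :
  stochastic Q -> \sum_u (x *m Q) 0 u = \sum_u x 0 u.
Proof.
move=> [_ Q1]; under eq_bigr do rewrite mxE.
by rewrite exchange_big /=; under eq_bigr do rewrite -mulr_sumr Q1 mulr1.
Qed.

Definition prob_in Q (S : {set 'I_n}) t u : R := \sum_(v in S) mxpow Q t u v.

Lemma prob_in_ge0 Q S t u : stochastic Q -> 0 <= prob_in Q S t u.
Proof.
by move=> /(stochastic_mxpow t) [Qt0 _]; apply: sumr_ge0.
Qed.

Lemma prob_in_le1 Q S t u : stochastic Q -> prob_in Q S t u <= 1.
Proof.
move=> /(stochastic_mxpow t) [Qt0 Qt1].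
by rewrite -(Qt1 u) [leRHS](bigID (mem S)) /= lerDl sumr_ge0.
Qed.

Section RestrictedWeights.
Variables (Q : 'M[R]_n) (w : 'rV[R]_n) (S : {set 'I_n}) (c : R) (x : 'rV[R]_n).
Hypothesis Q_rev : reversible Q w.
Hypothesis xE : forall v, x 0 v = if v \in S then c * w 0 v else 0.

Lemma row_mxpow_reversible t u :
  (x *m mxpow Q t) 0 u = c * w 0 u * prob_in Q S t u.
Proof.
rewrite mxE mulr_sumr [in RHS]big_mkcond /=; apply: eq_bigr => v _.
rewrite xE; case: (v \in S); last by rewrite mul0r.
by rewrite -!mulrA (reversible_mxpow t Q_rev).
Qed.

Hypotheses (Q0 : forall u v, 0 <= Q u v) (w_gt0 : forall u, 0 < w 0 u).
Hypothesis c0 : 0 <= c.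

Lemma discriminant_mxpow_sqrt_vec t u :
  (mxpow (discriminant Q) t *m sqrt_vec x) u 0
    = Num.sqrt c * Num.sqrt (w 0 u) * prob_in Q S t u.
Proof.
have sw_neq0 v : Num.sqrt (w 0 v) != 0 by rewrite gt_eqF ?sqrtr_gt0.
have Dt := mxpow_diag_conj sw_neq0 (discriminant_reversible Q0 w_gt0 Q_rev) t.
rewrite mxE mulr_sumr [in RHS]big_mkcond /=; apply: eq_bigr => v _.
rewrite Dt !mxE xE; case: (v \in S); last by rewrite sqrtr0 !mulr0.
by rewrite sqrtrM //; field.
Qed.

Hypothesis Q_stoch : stochastic Q.
Hypothesis x_sum1 : \sum_u x 0 u = 1.

Lemma projnorm_ge_prob_two_times (M : {set 'I_n}) t t' :
  projnorm M (mxpow (discriminant Q) t *m sqrt_vec x)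
    >= prob_two_times Q x M S t t'.
Proof.
have weights0 u : 0 <= c * w 0 u by rewrite mulr_ge0 // ltW.
have total : \sum_u c * w 0 u * prob_in Q S (t' - t) u = 1.
  under eq_bigr do rewrite -row_mxpow_reversible.
  by rewrite sum_row_mul_stochastic //; apply: stochastic_mxpow.
rewrite /prob_two_times /projnorm.
under eq_bigr => u _.
  rewrite -mulr_sumr row_mxpow_reversible -/(prob_in Q S (t' - t) u).
over.
under [X in _ <= Num.sqrt X]eq_bigr => u _.
  rewrite discriminant_mxpow_sqrt_vec !exprMn !sqr_sqrtr ?(ltW (w_gt0 u)) //.
over.
by apply: weighted_sum_le_sqrt total => u; rewrite ?prob_in_ge0 ?prob_in_le1.
Qed.

End RestrictedWeights.

Definition lazy_chain (P : 'M[R]_n) (q : 'I_n -> R) : 'M[R]_n :=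
  \matrix_(u, v) ((1 - q u) * P u v + q u * (u == v)%:R).

Lemma stochastic_lazy P q :
  stochastic P -> (forall u, 0 <= q u <= 1) -> stochastic (lazy_chain P q).
Proof.
move=> [P0 P1] q01; split=> [u v|u].
  have /andP[q0 q1] := q01 u.
  by rewrite mxE addr_ge0 ?mulr_ge0 ?subr_ge0.
under eq_bigr do rewrite mxE.
rewrite big_split /= -!mulr_sumr P1 (bigD1 u) //= eqxx big1 ?addr0 => [|v].
  by rewrite !mulr1 subrK.
by rewrite eq_sym => /negbTE->.
Qed.

Lemma reversible_lazy P pi q : (forall u, q u != 1) -> reversible P pi ->
  reversible (lazy_chain P q) (\row_u (pi 0 u / (1 - q u))).
Proof.
move=> q_neq1 rev u v; rewrite !mxE.
have q1 k : 1 - q k != 0 by rewrite subr_eq0 eq_sym q_neq1.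
case: (eqVneq u v) => [->//|uv]; rewrite !mulr0 !addr0.
by rewrite !mulrA !divfK.
Qed.

Definition interp_laziness (S M : {set 'I_n}) (qS qM : R) u : R :=
  if u \in S then qS else if u \in M then qM else 0.

Lemma interp_laziness_range S M qS qM u :
  0 <= qS < 1 -> 0 <= qM < 1 -> 0 <= interp_laziness S M qS qM u < 1.
Proof.
by rewrite /interp_laziness; do 2?case: ifP => _ //; rewrite lexx ltr01.
Qed.

Lemma interpE P S M qS qM :
  interp P S M qS qM = lazy_chain P (interp_laziness S M qS qM).
Proof.
apply/matrixP => u v; rewrite !mxE /interp_laziness.
by case: ifP => // _; case: ifP => // _; rewrite subr0 mul1r mul0r addr0.
Qed.

Lemma restr_dist_sum1 pi S :
  \sum_(v in S) pi 0 v != 0 -> \sum_u restr_dist pi S 0 u = 1.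
Proof.
move=> piS_neq0; under eq_bigr do rewrite mxE.
by rewrite -big_mkcond /= -mulr_suml divff.
Qed.

Lemma restr_dist_lazyE pi S q qS :
  (forall v, v \in S -> q v = qS) -> qS != 1 -> \sum_(v in S) pi 0 v != 0 ->
  forall v, restr_dist pi S 0 v =
    if v \in S then (1 - qS) / (\sum_(w in S) pi 0 w) * (pi 0 v / (1 - q v))
    else 0.
Proof.
move=> qE qS_neq1 piS_neq0 v; rewrite mxE; case: ifPn => // /qE->.
by field; rewrite subr_eq0 eq_sym qS_neq1.
Qed.

End ReversibleChains.

Theorem mainTheorem11 (R : rcfType) (n : nat) (P : 'M[R]_n) (pi : 'rV[R]_n)
    (S M : {set 'I_n}) (qS qM : R) :
  stochastic P -> ergodic P -> stationary_dist P pi -> reversible P pi ->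
  [disjoint S & M] -> S != set0 -> M != set0 ->
  0 <= qS -> qS < 1 -> 0 <= qM -> qM < 1 ->
  forall t t' : nat, (t < t')%N ->
    projnorm M (mxpow (discriminant (interp P S M qS qM)) t
                  *m sqrt_vec (restr_dist pi S))
    >= prob_two_times (interp P S M qS qM) (restr_dist pi S) M S t t'.
Proof.
move=> stochP [irrP _] statP revP _ /set0Pn[s sS] _ qS0 qS1 qM0 qM1 t t' _.
have pi_gt0 := irreducible_stationary_gt0 stochP irrP statP.
set q := interp_laziness S M qS qM.
have q_range u : 0 <= q u < 1.
  by apply: interp_laziness_range; apply/andP; split.
have q01 u : 0 <= q u <= 1 by have /andP[-> /ltW] := q_range u.
have q_neq1 u : q u != 1 by rewrite lt_eqF //; case/andP: (q_range u).
have piS_gt0 : 0 < \sum_(v in S) pi 0 v.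
  by rewrite (bigD1 s) //= ltr_pwDl ?sumr_ge0 // => v _; apply: ltW.
have piS_neq0 : \sum_(v in S) pi 0 v != 0 by rewrite gt_eqF.
rewrite interpE -/q.
apply: (projnorm_ge_prob_two_times (c := (1 - qS) / \sum_(v in S) pi 0 v)).
- exact: reversible_lazy.
- move=> v; rewrite [in RHS]mxE; apply: restr_dist_lazyE => // [u uS|].
    by rewrite /q /interp_laziness uS.
  by rewrite lt_eqF.
- by have [] := stochastic_lazy stochP q01.
- by move=> u; rewrite mxE divr_gt0 ?subr_gt0; case/andP: (q_range u).
- by rewrite divr_ge0 ?subr_ge0 ?ltW.
- exact: stochastic_lazy.
- exact: restr_dist_sum1.
Qed.
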